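(* Let $R$ be a ring, let $d_{0}:X_{0}\to X_{1}$ be a homomorphism of right $R$-modules with kernel $K$, and let $\zeta:Q_{0}\to Q_{1}$ be a homomorphism between injective right $R$-modules $Q_0,Q_1$. Then $K\in\mathcal{B}_{\zeta}$ if and only if for every homomorphism $f\in\mathrm{Hom}_{R}(X_{0},Q_{1})$ there exist homomorphisms $s_{0}:X_{0}\to Q_{0}$ and $s_{1}:X_{1}\to Q_{1}$ such that $f=s_{1}d_{0}+\zeta s_{0}$.
   Context: $R$ is a unital associative ring and modules are right $R$-modules. For a homomorphism $\zeta:Q_0\to Q_1$, $\mathcal{B}_{\zeta}=\{X\in\mathrm{Mod}(R)\mid \mathrm{Hom}_R(X,\zeta):\mathrm{Hom}_R(X,Q_0)\to\mathrm{Hom}_R(X,Q_1)\text{ is an epimorphism}\}$. *)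

(* Right R-modules are modelled as left modules over the
   converse ring R^c (lmodType R^c); homomorphisms are {linear _ -> _}. *)
From HB Require Import structures.
From mathcomp Require Import all_boot all_algebra.
Set Implicit Arguments. Unset Strict Implicit. Unset Printing Implicit Defensive.
Import GRing.Theory.
Local Open Scope ring_scope.

Definition injective_module (R : pzRingType) (Q : lmodType R^c) : Prop :=
  forall (A B : lmodType R^c) (i : {linear A -> B}), injective i ->
  forall f : {linear A -> Q}, exists g : {linear B -> Q}, forall a, g (i a) = f a.

Definition in_B (R : pzRingType) (Q0 Q1 : lmodType R^c)
  (zeta : {linear Q0 -> Q1}) (X : lmodType R^c) : Prop :=
  forall g : {linear X -> Q1}, exists h : {linear X -> Q0}, forall x, zeta (h x) = g x.

Definition is_kernel (R : pzRingType) (X0 X1 K : lmodType R^c)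
  (d0 : {linear X0 -> X1}) (k : {linear K -> X0}) : Prop :=
  [/\ injective k, (forall y, d0 (k y) = 0) &
      (forall x, d0 x = 0 -> exists y, k y = x)].

(* A map g : X0 -> Q into an injective module that vanishes on ker d0 is of
   the form s d0: it factors through the image of d0, and injectivity of Q
   extends the factor to all of X1.  Given f : X0 -> Q1, lift f k through zeta
   to h : K -> Q0 and extend h along k to s0 : X0 -> Q0; then f - zeta s0
   vanishes on ker d0, hence equals s1 d0.  Conversely a map K -> Q1 extends
   to f : X0 -> Q1, and restricting f = s1 d0 + zeta s0 to K kills the first
   summand. *)
From HB Require Import structures.
From mathcomp Require Import all_boot all_algebra.
From Stdlib Require Import ClassicalEpsilon.
Set Implicit Arguments. Unset Strict Implicit. Unset Printing Implicit Defensive.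
Import GRing.Theory.
Local Open Scope ring_scope.

(* Submodule structures need a boolean predicate, so membership in the image
   is decided classically. *)
Definition image_pred (S : pzRingType) (X0 X1 : lmodType S) (d : {linear X0 -> X1})
    : {pred X1} :=
  fun x => if excluded_middle_informative (exists y, d y = x) then true else false.

Lemma image_predP (S : pzRingType) (X0 X1 : lmodType S) (d : {linear X0 -> X1}) x :
  reflect (exists y, d y = x) (x \in image_pred d).
Proof.
by rewrite /in_mem /= /image_pred; case: excluded_middle_informative; constructor.
Qed.

Lemma image_pred_submod_closed (S : pzRingType) (X0 X1 : lmodType S)
    (d : {linear X0 -> X1}) : submod_closed (image_pred d).
Proof.
split; first by apply/image_predP; exists 0; rewrite linear0.
move=> a _ _ /image_predP[y <-] /image_predP[z <-]; apply/image_predP.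
by exists (a *: y + z); rewrite linearP.
Qed.

HB.instance Definition _ (S : pzRingType) (X0 X1 : lmodType S) (d : {linear X0 -> X1}) :=
  GRing.isSubmodClosed.Build S X1 (image_pred d) (image_pred_submod_closed d).

Definition image_submod (S : pzRingType) (X0 X1 : lmodType S) (d : {linear X0 -> X1}) :=
  {x : X1 | x \in image_pred d}.

HB.instance Definition _ (S : pzRingType) (X0 X1 : lmodType S) (d : {linear X0 -> X1}) :=
  [isSub for (@sval X1 (fun x => x \in image_pred d)) : image_submod d -> X1].
HB.instance Definition _ (S : pzRingType) (X0 X1 : lmodType S) (d : {linear X0 -> X1}) :=
  [Choice of image_submod d by <:].
HB.instance Definition _ (S : pzRingType) (X0 X1 : lmodType S) (d : {linear X0 -> X1}) :=
  [SubChoice_isSubLmodule of image_submod d by <:].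

Definition image_preim (S : pzRingType) (X0 X1 : lmodType S) (d : {linear X0 -> X1})
    (a : image_submod d) : X0 :=
  proj1_sig (constructive_indefinite_description _ (elimT (image_predP d _) (valP a))).

Lemma image_preimK (S : pzRingType) (X0 X1 : lmodType S) (d : {linear X0 -> X1})
    (a : image_submod d) : d (image_preim a) = val a.
Proof.
exact: proj2_sig (constructive_indefinite_description _ (elimT (image_predP d _) (valP a))).
Qed.

Definition image_of (S : pzRingType) (X0 X1 : lmodType S) (d : {linear X0 -> X1})
    (x : X0) : image_submod d :=
  exist _ (d x) (introT (image_predP d _) (ex_intro _ x erefl)).

Lemma linear_factor_image (S : pzRingType) (X0 X1 Q : lmodType S)
    (d : {linear X0 -> X1}) (g : {linear X0 -> Q}) :
    (forall x, d x = 0 -> g x = 0) ->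
  exists g' : {linear image_submod d -> Q}, forall x, g' (image_of d x) = g x.
Proof.
move=> g_ker.
have g_wd x y : d x = d y -> g x = g y.
  move=> dxy; apply/eqP; rewrite -subr_eq0 -linearB g_ker //.
  by rewrite linearB dxy subrr.
pose F (a : image_submod d) := g (image_preim a).
have F_lin : linear_for *:%R F.
  by move=> r u v; rewrite /F -linearP; apply: g_wd; rewrite linearP !image_preimK.
pose g' : {linear image_submod d -> Q} := HB.pack F (GRing.isLinear.Build _ _ _ _ F F_lin).
exists g' => x /=.
by apply: g_wd; rewrite image_preimK.
Qed.

Lemma injective_module_factor (R : pzRingType) (X0 X1 Q : lmodType R^c)
    (d : {linear X0 -> X1}) (g : {linear X0 -> Q}) :
    injective_module Q -> (forall x, d x = 0 -> g x = 0) ->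
  exists s : {linear X1 -> Q}, forall x, s (d x) = g x.
Proof.
move=> injQ /(linear_factor_image (Q := Q)) [g' g'E].
have [s sE] := injQ _ _ (val : {linear image_submod d -> X1}) val_inj g'.
by exists s => x; rewrite -g'E -sE.
Qed.

Section KernelCriterion.

Variables (R : pzRingType) (X0 X1 K Q0 Q1 : lmodType R^c).
Variables (d0 : {linear X0 -> X1}) (k : {linear K -> X0}) (zeta : {linear Q0 -> Q1}).
Hypothesis ker_k : is_kernel d0 k.

Lemma in_B_kernel_decomposition : injective_module Q0 -> injective_module Q1 ->
    in_B zeta K -> forall f : {linear X0 -> Q1},
  exists (s0 : {linear X0 -> Q0}) (s1 : {linear X1 -> Q1}),
    forall x, f x = s1 (d0 x) + zeta (s0 x).
Proof.
case: ker_k => k_inj _ ker_d0 injQ0 injQ1 zetaB f.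
have [h hE] := zetaB (f \o k).
have [s0 s0E] := injQ0 _ _ k k_inj h.
have rest_ker x : d0 x = 0 -> (f \- (zeta \o s0)) x = 0.
  by case/ker_d0 => y <-; rewrite /= s0E hE subrr.
have [s1 s1E] := injective_module_factor injQ1 rest_ker.
by exists s0, s1 => x; rewrite s1E /= subrK.
Qed.

Lemma kernel_decomposition_in_B : injective_module Q1 ->
    (forall f : {linear X0 -> Q1},
       exists (s0 : {linear X0 -> Q0}) (s1 : {linear X1 -> Q1}),
         forall x, f x = s1 (d0 x) + zeta (s0 x)) ->
  in_B zeta K.
Proof.
case: ker_k => k_inj d0k _ injQ1 decomp g.
have [f fE] := injQ1 _ _ k k_inj g.
have [s0 [s1 fD]] := decomp f.
by exists (s0 \o k) => y; rewrite -fE fD d0k linear0 add0r.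
Qed.

End KernelCriterion.

Theorem lemma2p5 (R : pzRingType) (X0 X1 K Q0 Q1 : lmodType R^c)
  (d0 : {linear X0 -> X1}) (k : {linear K -> X0}) (zeta : {linear Q0 -> Q1}) :
  is_kernel d0 k -> injective_module Q0 -> injective_module Q1 ->
  (in_B zeta K <->
   forall f : {linear X0 -> Q1},
     exists (s0 : {linear X0 -> Q0}) (s1 : {linear X1 -> Q1}),
       forall x, f x = s1 (d0 x) + zeta (s0 x)).
Proof.
move=> ker_k injQ0 injQ1; split.
- exact: in_B_kernel_decomposition ker_k injQ0 injQ1.
- exact: kernel_decomposition_in_B ker_k injQ1.
Qed.
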